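(* Let $w_1=(x_2'-x_2)y_1-(x_1'-x_1)y_2$ and $w_2=(x_2'-x_2)y_1'-(x_1'-x_1)y_2'$, and let $J=\{f\in K[X;Y]: fw_1=0\}\cap\{f\in K[X;Y]: fw_2=0\}$. Then $J$, viewed as a $K[X]$-module, is spanned by $h_1,h_2,h_3,h_4$, where $h_1=y_1y_2y_1'y_2'$, $h_2=y_1y_2\big(y_1'(x_2'-x_2)-y_2'(x_1'-x_1)\big)$, $h_3=y_1'y_2'\big(y_1(x_2'-x_2)-y_2(x_1'-x_1)\big)$, $h_4=\big(y_1'(x_2'-x_2)-y_2'(x_1'-x_1)\big)\big(y_1(x_2'-x_2)-y_2(x_1'-x_1)\big)$.
   Context: $K$ is an infinite field of characteristic different from 2. Let $X=\{x_1,x_2,x_1',x_2'\}$ and $Y=\{y_1,y_2,y_1',y_2'\}$, and let $K[X;Y]\cong K[X]\otimes_K E(Y)$ be the free supercommutative algebra: the $x$'s are even commuting variables, the $y$'s are odd pairwise anticommuting variables, and $E(Y)$ is the Grassmann algebra on the vector space with basis $Y$. $K[X]$ is the polynomial subalgebra in $X$. *)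

From HB Require Import structures.
From mathcomp Require Import all_boot all_order all_algebra.
From mathcomp Require Import mpoly.
Set Implicit Arguments. Unset Strict Implicit. Unset Printing Implicit Defensive.
Import Order.TTheory GRing.Theory.
Local Open Scope ring_scope.

(* Free supercommutative algebra K[X;Y] = K[X] (x) E(Y) with 4 even variables
   X = (x1, x2, x1', x2') = 'X_0, 'X_1, 'X_2, 'X_3 of {mpoly K[4]} and 4 odd
   variables Y = (y1, y2, y1', y2') indexed by 0,1,2,3.
   An element is a function from subsets A of 'I_4 to K[X]; f A is the
   coefficient of the Grassmann monomial y_A = y_{a1} ... y_{ak}, a1 < ... < ak. *)
Section Super.
Variable K : fieldType.

Definition salg := {ffun {set 'I_4} -> {mpoly K[4]}}.

(* y_A * y_B = (-1)^(#inversions) y_(A u B) when A, B disjoint *)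
Definition ninv (A B : {set 'I_4}) : nat :=
  #|[set p : 'I_4 * 'I_4 | [&& p.1 \in A, p.2 \in B & (p.2 < p.1)%N]]|.

Definition smul (f g : salg) : salg :=
  [ffun S : {set 'I_4} =>
     \sum_(A : {set 'I_4}) \sum_(B : {set 'I_4} | (A :&: B == set0) && (A :|: B == S))
        ((-1) ^+ ninv A B) *: (f A * g B)].

Definition sconst (p : {mpoly K[4]}) : salg :=
  [ffun S : {set 'I_4} => if S == set0 then p else 0].

Definition xv (i : 'I_4) : salg := sconst 'X_i.

Definition yv (j : 'I_4) : salg :=
  [ffun S : {set 'I_4} => if S == [set j] then 1 else 0].

Definition sact (p : {mpoly K[4]}) (f : salg) : salg := smul (sconst p) f.

Definition x1 := xv 0. Definition x2 := xv 1.
Definition x1' := xv 2. Definition x2' := xv 3.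
Definition y1 := yv 0. Definition y2 := yv 1.
Definition y1' := yv 2. Definition y2' := yv 3.

Definition w1 : salg := smul (x2' - x2) y1 - smul (x1' - x1) y2.
Definition w2 : salg := smul (x2' - x2) y1' - smul (x1' - x1) y2'.

Definition h1 : salg := smul (smul (smul y1 y2) y1') y2'.
Definition h2 : salg :=
  smul (smul y1 y2) (smul y1' (x2' - x2) - smul y2' (x1' - x1)).
Definition h3 : salg :=
  smul (smul y1' y2') (smul y1 (x2' - x2) - smul y2 (x1' - x1)).
Definition h4 : salg :=
  smul (smul y1' (x2' - x2) - smul y2' (x1' - x1))
       (smul y1 (x2' - x2) - smul y2 (x1' - x1)).

Definition inJ (f : salg) : Prop := smul f w1 = 0 /\ smul f w2 = 0.

End Super.

From HB Require Import structures.
From mathcomp Require Import all_boot all_order all_algebra.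
From mathcomp Require Import mpoly ring.
Set Implicit Arguments. Unset Strict Implicit. Unset Printing Implicit Defensive.
Import GRing.Theory.
Local Open Scope ring_scope.

(* Write a = x2' - x2 and b = x1' - x1, so that w1 = a y1 - b y2 and
   w2 = a y1' - b y2'. Read coefficient by coefficient in the basis of
   Grassmann monomials, f w1 = 0 says that the coefficients of f on monomials
   in y1', y2' alone vanish, and that for each monomial m in y1', y2' the
   coefficients of y2 m and y1 m satisfy a f_(y2 m) = -b f_(y1 m); likewise
   for w2 with the roles of (y1, y2) and (y1', y2') exchanged. As a and b are
   coprime (substituting x2 for x2' kills a but not b), each such relation
   gives f_(y2 m) = b g and f_(y1 m) = -a g. The two relations linking the
   coefficients on y1 y1', y1 y2', y2 y1', y2 y2' combine into one more such
   relation, which produces the coefficient of h4; the coefficients of h2, h3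
   and h1 are read off directly. *)

Section SubstX.
Variables (R : comNzRingType) (n : nat) (i j : 'I_n).

Definition substX : n.-tuple {mpoly R[n]} :=
  [tuple 'X_(if k == i then j else k) | k < n].

Lemma comp_substX_X k : 'X_k \mPo substX = 'X_(if k == i then j else k).
Proof. by rewrite comp_mpolyXU -tnth_nth tnth_mktuple. Qed.

Lemma comp_substX_subX : ('X_i - 'X_j) \mPo substX = 0 :> {mpoly R[n]}.
Proof. by rewrite comp_mpolyB !comp_substX_X eqxx; case: eqP => [->|]; rewrite subrr. Qed.

Lemma substX_mod (p : {mpoly R[n]}) :
  exists g, p - (p \mPo substX) = ('X_i - 'X_j) * g.
Proof.
pose P q := exists g, q - (q \mPo substX) = ('X_i - 'X_j) * g.
have P_add q r : P q -> P r -> P (q + r).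
  by move=> [g Eg] [h Eh]; exists (g + h); rewrite comp_mpolyD mulrDr -Eg -Eh; ring.
have P_mul q r : P q -> P r -> P (q * r).
  move=> [g Eg] [h Eh]; exists (g * r + (q \mPo substX) * h); rewrite rmorphM /=.
  have -> : q * r - (q \mPo substX) * (r \mPo substX)
          = (q - (q \mPo substX)) * r + (q \mPo substX) * (r - (r \mPo substX)) by ring.
  by rewrite Eg Eh; ring.
have P_X k : P 'X_k.
  rewrite /P comp_substX_X; case: eqP => [->|_]; first by exists 1; rewrite mulr1.
  by exists 0; rewrite subrr mulr0.
have P_scale c q : P q -> P (c *: q).
  by move=> [g Eg]; exists (c *: g); rewrite comp_mpolyZ -scalerBr Eg scalerAr.
rewrite [p]mpolyE; apply: (big_ind P) => [|q r|m _]; [|exact: P_add|].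
  by exists 0; rewrite raddf0 subrr mulr0.
apply: P_scale; rewrite mpolyXE_id; apply: (big_ind P) => [|q r|k _]; [|exact: P_mul|].
  by exists 0; rewrite rmorph1 subrr mulr0.
elim: (m k) => [|e IHe]; first by exists 0; rewrite expr0 rmorph1 subrr mulr0.
by rewrite exprS; apply: P_mul.
Qed.

End SubstX.

Section CoprimeSubX.
Variables (R : idomainType) (n : nat) (i j : 'I_n).

Lemma subX_neq0 : i != j -> 'X_i - 'X_j != 0 :> {mpoly R[n]}.
Proof.
move=> neq_ij; apply/eqP => /(congr1 (mcoeff U_(i))).
rewrite mcoeffB !mcoeffXU eqxx eq_sym (negbTE neq_ij) mcoeff0 subr0 => /eqP.
by rewrite oner_eq0.
Qed.

Lemma subX_mul_eq (e p q : {mpoly R[n]}) :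
  i != j -> e != 0 -> e \mPo substX R i j = e ->
  ('X_i - 'X_j) * p = e * q -> exists g, p = e * g /\ q = ('X_i - 'X_j) * g.
Proof.
move=> neq_ij nz_e fix_e Epq.
have : (e * q) \mPo substX R i j = 0 by rewrite -Epq rmorphM /= comp_substX_subX mul0r.
rewrite rmorphM /= fix_e => /eqP; rewrite mulf_eq0 (negbTE nz_e) => /eqP sq0.
have [g Eq] := substX_mod i j q; rewrite sq0 subr0 in Eq.
exists g; split => //; apply: (mulfI (subX_neq0 neq_ij)).
by rewrite Epq Eq mulrCA.
Qed.

End CoprimeSubX.

Lemma setIU_eq_setD (T : finType) (A B S : {set T}) :
  (A :&: B == set0) && (A :|: B == S) = (B \subset S) && (A == S :\: B).
Proof.
apply/andP/andP => [[/eqP AB0 /eqP <-]|[BS /eqP ->]].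
  have dAB : [disjoint A & B] by rewrite -setI_eq0 AB0.
  by rewrite subsetUr setDUl setDv setU0 (setDidPl dAB).
by rewrite setIDAC setDIl setDv setI0 -{2}(setID S B) (setIidPr BS) setUC.
Qed.

(* [bset b0 b1 b2 b3] is the subset of 'I_4 with characteristic vector
   (b0, b1, b2, b3): it turns every set computation into boolean ones. *)
Definition bset (b0 b1 b2 b3 : bool) : {set 'I_4} :=
  [set i : 'I_4 | nth false [:: b0; b1; b2; b3] i].

Ltac bset_ext := apply/setP => -[[|[|[|[|k]]]] lt_k4]; rewrite ?inE //=.

Lemma bsetE (S : {set 'I_4}) : S = bset (0 \in S) (1 \in S) (2 \in S) (3 \in S).
Proof. by bset_ext; apply: (congr1 (fun i => i \in S)); apply: val_inj. Qed.

Lemma eq_bset a0 a1 a2 a3 b0 b1 b2 b3 :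
  (bset a0 a1 a2 a3 == bset b0 b1 b2 b3) = [&& a0 == b0, a1 == b1, a2 == b2 & a3 == b3].
Proof.
apply/eqP/and4P => [/setP E|[/eqP-> /eqP-> /eqP-> /eqP->]//].
by split; apply/eqP; [move: (E 0) | move: (E 1) | move: (E 2) | move: (E 3)]; rewrite !inE.
Qed.

Lemma set0_bset : set0 = bset false false false false.
Proof. by bset_ext. Qed.

Lemma set1_bset (j : 'I_4) :
  [set j] = bset (val j == 0)%N (val j == 1)%N (val j == 2)%N (val j == 3)%N.
Proof. by bset_ext; case: j => [[|[|[|[|?]]]] ?]. Qed.

Lemma setI_bset a0 a1 a2 a3 b0 b1 b2 b3 :
  bset a0 a1 a2 a3 :&: bset b0 b1 b2 b3 = bset (a0 && b0) (a1 && b1) (a2 && b2) (a3 && b3).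
Proof. by bset_ext. Qed.

Lemma setU_bset a0 a1 a2 a3 b0 b1 b2 b3 :
  bset a0 a1 a2 a3 :|: bset b0 b1 b2 b3 = bset (a0 || b0) (a1 || b1) (a2 || b2) (a3 || b3).
Proof. by bset_ext. Qed.

Lemma setD_bset a0 a1 a2 a3 b0 b1 b2 b3 :
  bset a0 a1 a2 a3 :\: bset b0 b1 b2 b3 =
  bset (a0 && ~~ b0) (a1 && ~~ b1) (a2 && ~~ b2) (a3 && ~~ b3).
Proof. by bset_ext; rewrite andbC. Qed.

Lemma subset_bset a0 a1 a2 a3 b0 b1 b2 b3 :
  (bset a0 a1 a2 a3 \subset bset b0 b1 b2 b3) =
  [&& a0 ==> b0, a1 ==> b1, a2 ==> b2 & a3 ==> b3].
Proof.
by rewrite -setD_eq0 setD_bset set0_bset eq_bset !eqbF_neg !negb_and !negbK -!implybE.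
Qed.

Lemma ninv_bset a0 a1 a2 a3 b0 b1 b2 b3 :
  ninv (bset a0 a1 a2 a3) (bset b0 b1 b2 b3) =
  ((a1 && b0) + (a2 && b0) + (a2 && b1) + (a3 && b0) + (a3 && b1) + (a3 && b2))%N.
Proof.
set A := bset a0 a1 a2 a3; set B := bset b0 b1 b2 b3.
rewrite /ninv -sum1_card big_mkcond /=.
rewrite (eq_bigr (fun p => nat_of_bool [&& p.1 \in A, p.2 \in B & (p.2 < p.1)%N]));
  last by move=> [i j] _; rewrite inE; case: ifP.
rewrite -(pair_bigA _ (fun i j => nat_of_bool [&& i \in A, j \in B & (j < i)%N])) /=.
by rewrite !big_ord_recl !big_ord0 !inE /bump /= !andbT !andbF !addn0 !add0n !addnA.
Qed.

Lemma ninv0l (B : {set 'I_4}) : ninv set0 B = 0%N.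
Proof. by rewrite set0_bset (bsetE B) ninv_bset. Qed.

Section Grassmann.
Variable K : fieldType.
Local Notation P := {mpoly K[4]}.
Local Notation salg := (salg K).
Implicit Types (f g : salg) (p q : P) (A B S : {set 'I_4}).

Definition smon S p : salg := [ffun T => if T == S then p else 0].

Lemma smul_smonr f B q S :
  smul f (smon B q) S =
  if B \subset S then (-1) ^+ ninv (S :\: B) B *: (f (S :\: B) * q) else 0.
Proof.
rewrite ffunE.
under eq_bigr => A _.
  rewrite big_mkcond (bigD1 B) //= ffunE eqxx big1 ?addr0 => [|C /negbTE nCB]; last first.
    by rewrite ffunE nCB mulr0 scaler0 if_same.
  rewrite setIU_eq_setD.
  over.
case: (boolP (B \subset S)) => BS /=; last by rewrite big1.
by rewrite -big_mkcond big_pred1_eq.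
Qed.

Lemma sconst_smon p : sconst p = smon set0 p.
Proof. by []. Qed.

Lemma smul_smonl A p g S :
  smul (smon A p) g S =
  if A \subset S then (-1) ^+ ninv A (S :\: A) *: (p * g (S :\: A)) else 0.
Proof.
rewrite ffunE (bigD1 A) //= [X in _ + X]big1 ?addr0 => [|C /negbTE nCA]; last first.
  by rewrite big1 // => B _; rewrite ffunE nCA mul0r scaler0.
rewrite ffunE eqxx (eq_bigl (fun B => (A \subset S) && (B == S :\: A))) => [|B].
  by case: (A \subset S); rewrite ?big_pred1_eq ?big_pred0.
by rewrite setIC setUC setIU_eq_setD.
Qed.

Lemma smul_smon A B p q :
  smul (smon A p) (smon B q) =
  if A :&: B == set0 then (-1) ^+ ninv A B *: smon (A :|: B) (p * q) else 0.
Proof.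
apply/ffunP => S; rewrite smul_smonr.
transitivity (if (B \subset S) && (A == S :\: B) then (-1) ^+ ninv A B *: (p * q) else 0).
  case: (B \subset S) => //=; rewrite ffunE eq_sym.
  by case: eqP => [->|_]; rewrite ?mul0r ?scaler0.
rewrite -setIU_eq_setD; case: (A :&: B == set0) => /=; last by rewrite ffunE.
by rewrite !ffunE eq_sym; case: ifP; rewrite ?scaler0.
Qed.

Lemma scale_smon (c : K) S p : c *: smon S p = smon S (c *: p).
Proof. by apply/ffunP => T; rewrite !ffunE; case: ifP; rewrite ?scaler0. Qed.

Lemma smonB S p q : smon S (p - q) = smon S p - smon S q.
Proof. by apply/ffunP => T; rewrite !ffunE; case: ifP; rewrite ?subr0. Qed.

Lemma salgBE f g S : (f - g) S = f S - g S.
Proof. by rewrite !ffunE. Qed.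

Lemma salgDE f g S : (f + g) S = f S + g S.
Proof. by rewrite !ffunE. Qed.

Lemma smulDl f g h : smul (f + g) h = smul f h + smul g h.
Proof.
apply/ffunP => S; rewrite !ffunE -big_split; apply: eq_bigr => A _.
by rewrite -big_split; apply: eq_bigr => B _; rewrite ffunE mulrDl scalerDr.
Qed.

Lemma smulBl f g h : smul (f - g) h = smul f h - smul g h.
Proof.
apply/ffunP => S; rewrite !ffunE -sumrB; apply: eq_bigr => A _.
by rewrite -sumrB; apply: eq_bigr => B _; rewrite !ffunE mulrBl scalerBr.
Qed.

Lemma smulBr f g h : smul f (g - h) = smul f g - smul f h.
Proof.
apply/ffunP => S; rewrite !ffunE -sumrB; apply: eq_bigr => A _.
by rewrite -sumrB; apply: eq_bigr => B _; rewrite !ffunE mulrBr scalerBr.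
Qed.

Lemma sactE p g S : sact p g S = p * g S.
Proof. by rewrite /sact sconst_smon smul_smonl sub0set setD0 ninv0l scale1r. Qed.

Lemma scale_signE n p : (-1) ^+ n *: p = (-1) ^+ n * p.
Proof.
rewrite -[in LHS]signr_odd -[in RHS]signr_odd.
by case: odd; rewrite ?expr0 ?expr1 ?scale1r ?mul1r ?scaleN1r ?mulN1r.
Qed.

Lemma eq_salg_bset f g :
  (forall t0 t1 t2 t3, f (bset t0 t1 t2 t3) = g (bset t0 t1 t2 t3)) -> f = g.
Proof. by move=> fg; apply/ffunP => S; rewrite (bsetE S) fg. Qed.

End Grassmann.

Section Proposition.
Variable K : fieldType.
Local Notation P := {mpoly K[4]}.
Local Notation salg := (salg K).
Implicit Types (f : salg) (p q : P).

Definition dx1 : P := 'X_2 - 'X_0.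
Definition dx2 : P := 'X_3 - 'X_1.

Lemma yv_smon j : yv K j = smon [set j] 1.
Proof. by []. Qed.

Lemma y1_smon : y1 K = smon (bset true false false false) 1.
Proof. by rewrite /y1 yv_smon set1_bset. Qed.
Lemma y2_smon : y2 K = smon (bset false true false false) 1.
Proof. by rewrite /y2 yv_smon set1_bset. Qed.
Lemma y1'_smon : y1' K = smon (bset false false true false) 1.
Proof. by rewrite /y1' yv_smon set1_bset. Qed.
Lemma y2'_smon : y2' K = smon (bset false false false true) 1.
Proof. by rewrite /y2' yv_smon set1_bset. Qed.

Lemma dx1_smon : x1' K - x1 K = smon set0 dx1.
Proof. by rewrite smonB. Qed.
Lemma dx2_smon : x2' K - x2 K = smon set0 dx2.
Proof. by rewrite smonB. Qed.

Ltac smon_expand := do ?progress rewrite ?smulBl ?smulBr ?smul_smon ?set0_bset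
  ?setI_bset ?setU_bset ?ninv_bset ?eq_bset /= ?scale_smon ?scale_signE.

Ltac salg_ring := apply: eq_salg_bset; do 4 case; rewrite !ffunE ?eq_bset /=; ring.

Lemma w1E :
  w1 K = smon (bset true false false false) dx2 - smon (bset false true false false) dx1.
Proof. rewrite /w1 dx1_smon dx2_smon y1_smon y2_smon; smon_expand; salg_ring. Qed.

Lemma w2E :
  w2 K = smon (bset false false true false) dx2 - smon (bset false false false true) dx1.
Proof. rewrite /w2 dx1_smon dx2_smon y1'_smon y2'_smon; smon_expand; salg_ring. Qed.

Lemma h1E : h1 K = smon (bset true true true true) 1.
Proof. rewrite /h1 y1_smon y2_smon y1'_smon y2'_smon; smon_expand; salg_ring. Qed.

Lemma h2E :
  h2 K = smon (bset true true true false) dx2 - smon (bset true true false true) dx1.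
Proof.
rewrite /h2 dx1_smon dx2_smon y1_smon y2_smon y1'_smon y2'_smon; smon_expand; salg_ring.
Qed.

Lemma h3E :
  h3 K = smon (bset true false true true) dx2 - smon (bset false true true true) dx1.
Proof.
rewrite /h3 dx1_smon dx2_smon y1_smon y2_smon y1'_smon y2'_smon; smon_expand; salg_ring.
Qed.

Lemma h4E :
  h4 K = smon (bset false true true false) (dx1 * dx2)
       + smon (bset true false false true) (dx1 * dx2)
       - smon (bset true false true false) (dx2 * dx2)
       - smon (bset false true false true) (dx1 * dx1).
Proof.
rewrite /h4 dx1_smon dx2_smon y1_smon y2_smon y1'_smon y2'_smon; smon_expand; salg_ring.
Qed.

Lemma smul_w1_bset f t0 t1 t2 t3 :
  smul f (w1 K) (bset t0 t1 t2 t3) =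
  (if t0 then (-1) ^+ (t1 + t2 + t3) * f (bset false t1 t2 t3) * dx2 else 0)
  - (if t1 then (-1) ^+ (t2 + t3) * f (bset t0 false t2 t3) * dx1 else 0).
Proof.
rewrite w1E smulBr salgBE !smul_smonr !subset_bset !setD_bset !ninv_bset !scale_signE.
by case: t0; case: t1 => /=; rewrite ?andbT ?andbF ?addn0 ?add0n ?mulrA.
Qed.

Lemma smul_w2_bset f t0 t1 t2 t3 :
  smul f (w2 K) (bset t0 t1 t2 t3) =
  (if t2 then (-1) ^+ t3 * f (bset t0 t1 false t3) * dx2 else 0)
  - (if t3 then f (bset t0 t1 t2 false) * dx1 else 0).
Proof.
rewrite w2E smulBr salgBE !smul_smonr !subset_bset !setD_bset !ninv_bset !scale_signE.
by case: t2; case: t3 => /=; rewrite ?andbT ?andbF ?addn0 ?mulrA ?expr0 ?mul1r.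
Qed.

Lemma dx1_neq0 : dx1 != 0.
Proof. exact: subX_neq0. Qed.

Lemma dx2_neq0 : dx2 != 0.
Proof. exact: subX_neq0. Qed.

Lemma dx_mul_eq p q : dx2 * p = dx1 * q -> exists g, p = dx1 * g /\ q = dx2 * g.
Proof.
apply: (@subX_mul_eq _ _ 3 1) => //; first exact: dx1_neq0.
by rewrite comp_mpolyB !comp_substX_X.
Qed.

Lemma annihilator_w1 f : smul f (w1 K) = 0 ->
  (forall t2 t3, f (bset false false t2 t3) = 0) /\
  (forall t2 t3, exists g,
     f (bset false true t2 t3) = dx1 * g /\ f (bset true false t2 t3) = - (dx2 * g)).
Proof.
move=> /ffunP fw1; split => t2 t3.
  have := fw1 (bset true false t2 t3).
  rewrite smul_w1_bset ffunE subr0 => /eqP.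
  by rewrite !mulf_eq0 signr_eq0 (negbTE dx2_neq0) orbF => /eqP.
have := fw1 (bset true true t2 t3).
rewrite smul_w1_bset ffunE -addnA add1n exprS => /eqP; rewrite subr_eq0 => /eqP.
set s := (-1) ^+ _ => E.
have [g [E01 E10]] : exists g,
    f (bset false true t2 t3) = dx1 * g /\ - f (bset true false t2 t3) = dx2 * g.
  apply: dx_mul_eq; apply: (@mulfI _ s); first by rewrite signr_eq0.
  by transitivity (- (-1 * s * f (bset false true t2 t3) * dx2)); [ring | rewrite E; ring].
by exists g; rewrite -E10 opprK.
Qed.

Lemma annihilator_w2 f : smul f (w2 K) = 0 ->
  (forall t0 t1, f (bset t0 t1 false false) = 0) /\
  (forall t0 t1, exists g,
     f (bset t0 t1 false true) = dx1 * g /\ f (bset t0 t1 true false) = - (dx2 * g)).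
Proof.
move=> /ffunP fw2; split => t0 t1.
  have := fw2 (bset t0 t1 true false).
  rewrite smul_w2_bset ffunE subr0 => /eqP.
  by rewrite !mulf_eq0 signr_eq0 (negbTE dx2_neq0) orbF => /eqP.
have := fw2 (bset t0 t1 true true).
rewrite smul_w2_bset ffunE => /eqP; rewrite subr_eq0 => /eqP E.
have [g [E01 E10]] : exists g,
    f (bset t0 t1 false true) = dx1 * g /\ - f (bset t0 t1 true false) = dx2 * g.
  by apply: dx_mul_eq; transitivity (- ((-1) ^+ true * f (bset t0 t1 false true) * dx2));
    [ring | rewrite E; ring].
by exists g; rewrite -E10 opprK.
Qed.

Lemma smul_sactl p f h : smul (sact p f) h = sact p (smul f h).
Proof.
apply/ffunP => S; rewrite sactE !ffunE mulr_sumr; apply: eq_bigr => A _.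
by rewrite mulr_sumr; apply: eq_bigr => B _; rewrite sactE -scalerAr mulrA.
Qed.

Lemma inJ_sact p f : inJ f -> inJ (sact p f).
Proof.
move=> [fw1 fw2]; split; rewrite smul_sactl ?fw1 ?fw2.
all: by apply/ffunP => S; rewrite sactE !ffunE mulr0.
Qed.

Lemma inJD f h : inJ f -> inJ h -> inJ (f + h).
Proof. by move=> [fw1 fw2] [hw1 hw2]; split; rewrite smulDl ?fw1 ?fw2 ?hw1 ?hw2 addr0. Qed.

Ltac annihilates lem := apply: eq_salg_bset; do 4 case; rewrite lem !ffunE ?eq_bset /=; ring.

Lemma generators_inJ : [/\ inJ (h1 K), inJ (h2 K), inJ (h3 K) & inJ (h4 K)].
Proof.
rewrite /inJ h1E h2E h3E h4E.
by split; (split; [annihilates smul_w1_bset | annihilates smul_w2_bset]).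
Qed.

Lemma inJ_span f : inJ f ->
  exists c1 c2 c3 c4 : P,
    f = sact c1 (h1 K) + sact c2 (h2 K) + sact c3 (h3 K) + sact c4 (h4 K).
Proof.
move=> [/annihilator_w1 [Z1 D1] /annihilator_w2 [Z2 D2]].
have [g3 [F0111 F1011]] := D1 true true.
have [k [F0110 F1010]] := D1 true false.
have [g [F0101 F1001]] := D1 false true.
have [g2 [F1101 F1110]] := D2 true true.
have [k' [F1001' F1010']] := D2 true false.
have [m [gE kE]] : exists m, g = dx1 * m /\ - k = dx2 * m.
  apply: dx_mul_eq; apply: oppr_inj; rewrite -F1001 F1001' mulrN opprK.
  by congr (_ * _); apply: (mulfI dx2_neq0); apply: oppr_inj; rewrite -F1010 -F1010'.
exists (f (bset true true true true)), (- g2), (- g3), (- m).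
rewrite h1E h2E h3E h4E; apply: eq_salg_bset; do 4 case.
all: rewrite !salgDE !sactE !ffunE ?eq_bset /= ?Z1 ?Z2 ?F0111 ?F1011 ?F0110 ?F1010.
all: by rewrite ?F0101 ?F1001 ?F1101 ?F1110 ?gE ?(canRL (@opprK _) kE); ring.
Qed.

End Proposition.

Theorem proposition1 (K : fieldType)
  (K_infinite : forall s : seq K, exists a : K, a \notin s)
  (K_char : (2%:R : K) != 0) :
  forall f : salg K,
    inJ f <->
    exists c1 c2 c3 c4 : {mpoly K[4]},
      f = sact c1 (h1 K) + sact c2 (h2 K) + sact c3 (h3 K) + sact c4 (h4 K).
Proof.
move=> f; split=> [|[c1 [c2 [c3 [c4 ->]]]]]; first exact: inJ_span.
have [J1 J2 J3 J4] := generators_inJ K.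
by repeat apply: inJD; apply: inJ_sact.
Qed.
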